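(* Let $f,g:\mathbb{R}^n\to[0,+\infty)$ and $h_1,h_2:\mathbb{R}^n\to\mathbb{R}$, let $C\subseteq\mathbb{R}^n$ be closed and convex, $\Omega:=\{x:g(x)\neq0\}$, $C\cap\Omega\neq\emptyset$, and assume: $f$ is convex; $g$ is differentiable with locally Lipschitz gradient; $h_1$ is differentiable with locally Lipschitz gradient; $h_2$ is convex. Define $F:\mathbb{R}^n\to(-\infty,+\infty]$ by $F(x)=f^2(x)/g(x)+h_1(x)-h_2(x)$ if $x\in\Omega\cap C$ and $F(x)=+\infty$ otherwise. Suppose $S:=\{x\in\mathbb{R}^n:f(x)=g(x)=0\}\neq\emptyset$. If $x^0\in\mathrm{dom}F$ satisfies $$F(x^0)<\inf\Big\{\liminf_{z\to x}F(z):x\in S\Big\},$$ then the level set $\mathcal{X}_0:=\{x\in\mathrm{dom}F:F(x)\le F(x^0)\}$ is closed.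
   Context: $\mathrm{dom}F=\{x:F(x)<+\infty\}=\Omega\cap C$. *)

From HB Require Import structures.
From mathcomp Require Import all_boot all_order all_algebra.
From mathcomp Require Import all_classical all_reals all_analysis.
Set Implicit Arguments. Unset Strict Implicit. Unset Printing Implicit Defensive.
Import Order.TTheory GRing.Theory Num.Theory.
Import numFieldNormedType.Exports.
Local Open Scope classical_set_scope.
Local Open Scope ring_scope.

(* R^n is represented by row vectors 'rV[R]_n. *)

Definition convex_fun (R : realType) (n : nat) (f : 'rV[R]_n -> R) : Prop :=
  forall (x y : 'rV[R]_n) (t : R), 0 <= t -> t <= 1 ->
    f (t *: x + (1 - t) *: y) <= t * f x + (1 - t) * f y.

Definition dotv (R : realType) (n : nat) (u v : 'rV[R]_n) : R :=
  \sum_(i < n) u ord0 i * v ord0 i.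

Definition diff_loclip_grad (R : realType) (n : nat) (g : 'rV[R]_n -> R) : Prop :=
  exists G : 'rV[R]_n -> 'rV[R]_n,
    (forall x, differentiable g x /\ forall v, 'd g x v = dotv (G x) v) /\
    (forall x, exists2 r : R, 0 < r & exists L : R,
       forall y z, ball x r y -> ball x r z -> `|G y - G z| <= L * `|y - z|).

Definition Ffun (R : realType) (n : nat) (f g h1 h2 : 'rV[R]_n -> R)
  (C : set 'rV[R]_n) (x : 'rV[R]_n) : \bar R :=
  if `[< g x != 0 /\ C x >] then ((f x ^+ 2 / g x + h1 x - h2 x)%:E)%E
  else (+oo)%E.

Definition liminf_at (R : realType) (n : nat) (F : 'rV[R]_n -> \bar R)
  (x : 'rV[R]_n) : \bar R :=
  ereal_sup [set ereal_inf (F @` ball x r) | r in [set r : R | 0 < r]].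

From HB Require Import structures.
From mathcomp Require Import all_boot all_order all_algebra.
From mathcomp Require Import all_classical all_reals all_analysis.
From mathcomp Require Import ring lra.
Import Order.TTheory GRing.Theory Num.Theory.
Import numFieldNormedType.Exports.
Local Open Scope classical_set_scope.
Local Open Scope ring_scope.

(* Only continuity is used: a convex function on R^n is bounded above on
   boxes (convexity along one coordinate at a time reduces to the vertices),
   and such a bound controls its oscillation, so it is continuous; the
   differentiable g and h1 are continuous too.  Let x be a limit of points z
   of the level set, where F z = f z ^ 2 / g z + h1 z - h2 z <= F x0.  Then
   x is in C, which is closed.  If g x <> 0, F is continuous at x, hence
   F x <= F x0.  If g x = 0 <> f x, then f ^ 2 / g blows up near x while
   h1 - h2 stays bounded below, contradicting F z <= F x0.  If
   f x = g x = 0, then x is in S and liminf_{z -> x} F z <= F x0,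
   contradicting the choice of x0. *)

Section ConvexFunContinuous.
Context {R : realType} {n : nat}.
Implicit Types (f : 'rV[R]_n -> R) (a y : 'rV[R]_n) (r : R).

Definition in_box a r y := forall j, `|y ord0 j - a ord0 j| <= r.

Definition row_set y (k : 'I_n) (v : R) : 'rV[R]_n :=
  \row_j (if j == k then v else y ord0 j).

Lemma convex_fun_le_max f (u v : 'rV[R]_n) t : convex_fun f ->
  0 <= t -> t <= 1 -> f (t *: u + (1 - t) *: v) <= Num.max (f u) (f v).
Proof.
move=> cf t0 t1; apply: (le_trans (cf _ _ _ t0 t1)).
have : t * f u <= t * Num.max (f u) (f v) by rewrite ler_wpM2l ?le_max ?lexx.
have : (1 - t) * f v <= (1 - t) * Num.max (f u) (f v).
  by rewrite ler_wpM2l ?subr_ge0 ?le_max ?lexx ?orbT.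
lra.
Qed.

Lemma convex_fun_le_row_set f y k lo hi : convex_fun f ->
  lo < hi -> lo <= y ord0 k <= hi ->
  f y <= Num.max (f (row_set y k lo)) (f (row_set y k hi)).
Proof.
move=> cf lohi /andP[loy yhi].
pose t := (hi - y ord0 k) / (hi - lo).
have hilo : 0 < hi - lo by rewrite subr_gt0.
have t0 : 0 <= t by rewrite divr_ge0 // ?subr_ge0 // ltW.
have t1 : t <= 1 by rewrite ler_pdivrMr // mul1r lerD2l lerN2.
suff {1}-> : y = t *: row_set y k lo + (1 - t) *: row_set y k hi.
  exact: convex_fun_le_max.
apply/rowP => j; rewrite !mxE; case: eqP => [->|_].
  by rewrite /t; field; rewrite gt_eqF.
by rewrite -mulrDl addrCA subrr addr0 mul1r.
Qed.

Lemma convex_fun_bounded_on_box f a r : convex_fun f -> 0 < r ->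
  exists M, forall y, in_box a r y -> f y <= M.
Proof.
move=> cf r0.
pose vertex (s : {ffun 'I_n -> bool}) : 'rV[R]_n :=
  \row_j (if s j then a ord0 j + r else a ord0 j - r).
pose M := \sum_(s : {ffun 'I_n -> bool}) `|f (vertex s)|.
have vertexM s : f (vertex s) <= M.
  by rewrite /M (bigD1 s) //= (le_trans (ler_norm _)) // lerDl sumr_ge0.
exists M.
(* Invariant: the coordinates [j >= k] of [y] are at an endpoint [a j +- r];
   convexity along coordinate [k] pushes one more coordinate to an endpoint. *)
pose at_vertex (y : 'rV[R]_n) (j : 'I_n) :=
  y ord0 j = a ord0 j + r \/ y ord0 j = a ord0 j - r.
suff box_le k : (k <= n)%N -> forall y, in_box a r y ->
    (forall j : 'I_n, (k <= j)%N -> at_vertex y j) -> f y <= M.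
  by move=> y hy; apply: (box_le n) => // j; rewrite leqNgt ltn_ord.
elim: k => [_|k IH kn] y hy yv.
  have -> : y = vertex [ffun j => y ord0 j == a ord0 j + r].
    apply/rowP => j; rewrite !mxE ffunE.
    by case: (yv j (leq0n _)) => ->; [rewrite eqxx | case: eqP].
  exact: vertexM.
pose kk : 'I_n := Ordinal kn.
have row_set_le v : v = a ord0 kk + r \/ v = a ord0 kk - r ->
    f (row_set y kk v) <= M.
  move=> vv; apply: IH (ltnW kn) _ _ _.
    move=> j; rewrite /row_set mxE; case: eqP => [->|_]; last exact: hy.
    by case: vv => ->; rewrite addrAC subrr add0r ?normrN gtr0_norm.
  move=> j kj; rewrite /at_vertex /row_set !mxE; case: eqP => [->|jk] //.
  apply: yv; rewrite ltn_neqAle kj andbT.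
  by apply/eqP => kjE; apply: jk; apply: val_inj; rewrite /= kjE.
have := hy kk; rewrite ler_norml => /andP[lo hi].
apply: le_trans
  (convex_fun_le_row_set f y kk (a ord0 kk - r) (a ord0 kk + r) cf _ _) _.
- by rewrite ltrD2l gtrN.
- by apply/andP; split; lra.
by rewrite ge_max; apply/andP; split; apply: row_set_le; [right | left].
Qed.

Lemma ball_in_box a d y : ball a d y -> in_box a d y.
Proof.
by move=> [_ ay] j; move: (ay ord0 j); rewrite -ball_normE /= distrC => /ltW.
Qed.

Lemma convex_fun_le_dist f a M d y : convex_fun f ->
  (forall z, in_box a 1 z -> f z <= M) -> 0 < d -> d <= 1 -> in_box a d y ->
  `|f a - f y| <= d * (M - f a).
Proof.
move=> cf fM d0 d1 ay.
(* [y] lies between [a] and [a + (y - a) / d], and [a] between [y] and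
   [a - (y - a) / d]; both outer points are in the unit box. *)
have away_in_box s : `|s| = 1 -> in_box a 1 (a + s / d *: (y - a)).
  move=> s1 j; rewrite !mxE addrAC subrr add0r normrM normrM s1 mul1r.
  by rewrite normfV (gtr0_norm d0) mulrC ler_pdivrMr // mul1r.
have upper : f y <= d * M + (1 - d) * f a.
  have -> : y = d *: (a + 1 / d *: (y - a)) + (1 - d) *: a.
    by apply/rowP => j; rewrite !mxE; field; rewrite gt_eqF.
  apply: (le_trans (cf _ _ _ (ltW d0) d1)).
  rewrite lerD2r; apply: ler_wpM2l; first exact: ltW.
  exact/fM/away_in_box/normr1.
have lower : (1 + d) * f a <= f y + d * M.
  have d10 : 0 < 1 + d by rewrite addr_gt0.
  have t0 : 0 <= (1 + d)^-1 by rewrite invr_ge0 ltW.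
  have t1 : (1 + d)^-1 <= 1 by rewrite invf_le1 // lerDl ltW.
  have := cf y (a + -1 / d *: (y - a)) _ t0 t1.
  have <- : a = (1 + d)^-1 *: y + (1 - (1 + d)^-1) *: (a + -1 / d *: (y - a)).
    by apply/rowP => j; rewrite !mxE; field; rewrite ?gt_eqF.
  move=> /(ler_wpM2l (ltW d10)) /le_trans; apply.
  have -> : (1 + d) * ((1 + d)^-1 * f y
      + (1 - (1 + d)^-1) * f (a + -1 / d *: (y - a)))
      = f y + d * f (a + -1 / d *: (y - a)) by field; rewrite gt_eqF.
  rewrite lerD2l; apply: ler_wpM2l; [exact: ltW | apply/fM/away_in_box].
  by rewrite normrN normr1.
rewrite ler_norml; apply/andP; split; lra.
Qed.

Lemma convex_fun_continuous {f} : convex_fun f -> continuous f.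
Proof.
move=> cf a; have [M fM] := convex_fun_bounded_on_box f a 1 cf ltr01.
have faM : f a <= M by apply: fM => j; rewrite subrr normr0.
apply/(@cvgrPdist_le _ _ _ (nbhs a) (nbhs_filter a)) => e e0.
pose d := Num.min 1 (e / (M - f a + 1)).
have D0 : 0 < M - f a + 1 by rewrite ltr_wpDl // subr_ge0.
have d0 : 0 < d by rewrite lt_min ltr01 divr_gt0.
have de : d * (M - f a) <= e.
  apply: (@le_trans _ _ (e / (M - f a + 1) * (M - f a))).
    by rewrite ler_wpM2r ?subr_ge0 // ge_min lexx orbT.
  by rewrite mulrAC ler_pdivrMr // ler_pM2l // lerDl.
near=> y; apply: le_trans de.
apply: convex_fun_le_dist => //; first by rewrite ge_min lexx.
apply: ball_in_box; near: y; exact: (nbhsx_ballx a d d0).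
Unshelve. all: by end_near.
Qed.

End ConvexFunContinuous.

Lemma diff_loclip_grad_continuous {R : realType} {n : nat} {g : 'rV[R]_n -> R} :
  diff_loclip_grad g -> continuous g.
Proof.
by move=> [G [dg _]] x; apply: differentiable_continuous; case: (dg x).
Qed.

Lemma continuous_closure_le {T : topologicalType} (R : realType) (phi : T -> R)
    (A : set T) (c : R) (x : T) :
  {for x, continuous phi} -> closure A x -> (forall z, A z -> phi z <= c) ->
  phi x <= c.
Proof.
move=> phix Ax Ac; rewrite leNgt; apply/negP => cx.
have [z [/Ac zc /= cz]] := Ax _ (cvgr_gt _ phix _ cx).
by move: cz; rewrite ltNge zc.
Qed.

Lemma sqr_div_continuous {T : topologicalType} {R : realType} {f g k : T -> R}
    {x : T} :
  {for x, continuous f} -> {for x, continuous g} -> {for x, continuous k} ->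
  g x != 0 -> {for x, continuous (fun z => f z ^+ 2 / g z + k z)}.
Proof.
by move=> fx gx kx gx0; exact: cvgD (cvgM (cvgM fx fx) (cvgV gx0 gx)) kx.
Qed.

Lemma sqr_div_blowup {T : topologicalType} {R : realType} {f g k : T -> R}
    {x : T} (c : R) :
  {for x, continuous f} -> {for x, continuous g} -> {for x, continuous k} ->
  (forall z, 0 <= g z) -> g x = 0 -> f x != 0 ->
  \forall z \near x, g z != 0 -> c < f z ^+ 2 / g z + k z.
Proof.
move=> fx gx kx g0 gx0 fx0.
pose q := f x ^+ 2 / 2; pose K := `|c - k x| + 2.
have fx2 : 0 < f x ^+ 2 by rewrite lt_def sqrf_eq0 fx0 sqr_ge0.
have q0 : 0 < q by rewrite divr_gt0.
have K0 : 0 < K by rewrite ltr_wpDl.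
have f2x : {for x, continuous (fun z => f z ^+ 2)}.
  exact: (cvgM fx fx).
have f2_gt : \forall z \near x, q < f z ^+ 2.
  by apply: (cvgr_gt _ f2x); rewrite /q; lra.
have g_small : \forall z \near x, g z < q / K.
  by apply: (cvgr_lt _ gx); rewrite gx0 divr_gt0.
have k_big : \forall z \near x, k x - 1 < k z.
  by apply: (cvgr_gt _ kx); rewrite gtrBl.
(* Near [x]: [f ^ 2 / g > q / g > K > c - k x + 1 > c - k]. *)
near=> z => gz.
have gz0 : 0 < g z by rewrite lt_def gz g0.
have Kq : K < q / g z.
  by rewrite ltr_pdivlMr // mulrC -ltr_pdivlMr //; near: z.
have qf : q / g z <= f z ^+ 2 / g z.
  by rewrite ler_pM2r ?invr_gt0 // ltW //; near: z.
have : k x - 1 < k z by near: z.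
have := ler_norm (c - k x); rewrite /K in Kq; lra.
Unshelve. all: by end_near.
Qed.

Lemma liminf_at_closure_le (R : realType) (n : nat) (F : 'rV[R]_n -> \bar R)
    (A : set 'rV[R]_n) (a : \bar R) (x : 'rV[R]_n) :
  closure A x -> (forall z, A z -> (F z <= a)%E) -> (liminf_at F x <= a)%E.
Proof.
move=> Ax Aa; apply: ge_ereal_sup => _ [r /= r0 <-].
have [z [Az xz]] := Ax _ (nbhsx_ballx x r r0).
by apply: le_trans (Aa _ Az); apply: ereal_inf_lbound; exists z.
Qed.

Lemma FfunE (R : realType) (n : nat) (f g h1 h2 : 'rV[R]_n -> R)
    (C : set 'rV[R]_n) (z : 'rV[R]_n) :
  C z -> g z != 0 -> Ffun f g h1 h2 C z = (f z ^+ 2 / g z + h1 z - h2 z)%:E.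
Proof. by move=> Cz gz; rewrite /Ffun asboolT. Qed.

Theorem proposition4p1 (R : realType) (n : nat)
  (f g h1 h2 : 'rV[R]_n -> R) (C : set 'rV[R]_n) (x0 : 'rV[R]_n) :
  (forall x, 0 <= f x) -> (forall x, 0 <= g x) ->
  closed C -> convex_set C ->
  (C `&` [set x | g x != 0] !=set0) ->
  convex_fun f -> diff_loclip_grad g -> diff_loclip_grad h1 -> convex_fun h2 ->
  ([set x | f x = 0 /\ g x = 0] !=set0) ->
  (C `&` [set x | g x != 0]) x0 ->
  (Ffun f g h1 h2 C x0 <
     ereal_inf [set liminf_at (Ffun f g h1 h2 C) x | x in [set x | f x = 0%R /\ g x = 0%R]])%E ->
  closed [set x | (C `&` [set x | g x != 0]) x /\
                  (Ffun f g h1 h2 C x <= Ffun f g h1 h2 C x0)%E].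
Proof.
move=> _ g_ge0 closedC _ _ cvx_f diff_g diff_h1 cvx_h2 _ [Cx0 gx0] x0_lt x clx.
set F := Ffun f g h1 h2 C in x0_lt clx *.
set X0 := [set x | _ /\ _] in clx *.
pose phi z := f z ^+ 2 / g z + (h1 z - h2 z).
have phi_le z : X0 z -> phi z <= phi x0.
  by move=> [[Cz gz]]; rewrite /F !FfunE // -!addrA.
have fc := convex_fun_continuous cvx_f.
have h2c := convex_fun_continuous cvx_h2.
have gc := diff_loclip_grad_continuous diff_g.
have h1c := diff_loclip_grad_continuous diff_h1.
have h12c : continuous (fun z => h1 z - h2 z).
  by move=> z; exact: cvgB (h1c z) (h2c z).
have Cx : C x by apply: closedC; apply: closureS clx => z [[]].
have gx : g x != 0.
  apply/eqP => gx_eq0; have [fx_eq0|fx] := eqVneq (f x) 0.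
    have : (liminf_at F x <= F x0)%E.
      by apply: liminf_at_closure_le clx _ => z [].
    apply/negP; rewrite -ltNge; apply: lt_le_trans x0_lt _.
    by apply: ereal_inf_lbound; exists x.
  have blowup := sqr_div_blowup (phi x0) (fc x) (gc x) (h12c x) g_ge0 gx_eq0 fx.
  have [z [/[dup] /phi_le zx0 [[_ gz] _]]] := clx _ blowup.
  by move=> /(_ gz); rewrite ltNge zx0.
split; first by [].
rewrite /F !FfunE // -!addrA lee_fin.
apply: continuous_closure_le clx phi_le.
exact: sqr_div_continuous (fc x) (gc x) (h12c x) gx.
Qed.
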